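(* Let $X=x_1x_2\cdots x_s$ be a batch of $S(H)$, where each $x_j$ is $s(v)$ for some vertex $v$ or $e(v,w)$ for some edge $(v,w)$ of $H$. Then for every $1\le j\le s$, some phrase of the LZ77 parsing of the string $x_1\cdots x_s$ ends at the last symbol of $x_j$.
   Context: $H$ is a directed graph without loops in which no vertex has outdegree exactly 1. For each vertex $v$ introduce three symbols $v$, $v'$, $\$_v$; all these symbols are pairwise distinct (over all vertices). For a vertex $v$ with outdegree $d=d(v)\ge 1$, let $w_0,\dots,w_{d-1}$ be its out-neighbors in a fixed cyclic order (indices mod $d$); the edge $(v,w_{i-1})$ cyclicly precedes $(v,w_i)$. Define $e(v,w_i)=(v'w_{i-1})^4v'w_i$ for $0\le i<d$ and $s(v)=v^4(v')^5\$_v$. $S(H)$ is the set of all strings $s(v)$ ($v$ a vertex) and $e(v,w)$ ($(v,w)$ an edge). A batch is a sequence of distinct elements of $S(H)$, identified with their concatenation; a schedule is a partition of $S(H)$ into batches. LZ77 parsing of a string $z$: $z=z_1z_2\cdots z_t$ where, once $z_1,\dots,z_{i-1}$ are determined and the remaining suffix is nonempty, $z_i$ is the longest nonempty prefix $u$ of the remaining suffix such that $u^-$ ($u$ with its last symbol deleted) has an occurrence in $z$ starting at a position strictly smaller than the starting position of $u$ (the empty string always qualifies). The $z_i$ are the phrases; $|\mathcal C(z)|=t$ is the number of phrases. *)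

From HB Require Import structures.
From mathcomp Require Import all_boot.
Set Implicit Arguments. Unset Strict Implicit. Unset Printing Implicit Defensive.

Section Defs.
Variable V : finType.

(* Symbols: for each vertex v the symbols v, v', $_v; pairwise distinct by construction. *)
Inductive sym := SymV of V | SymP of V | SymD of V.

Definition sym_enc (a : sym) : V + V + V :=
  match a with SymV v => inl (inl v) | SymP v => inl (inr v) | SymD v => inr v end.
Definition sym_dec (x : V + V + V) : sym :=
  match x with inl (inl v) => SymV v | inl (inr v) => SymP v | inr v => SymD v end.
Lemma sym_encK : cancel sym_enc sym_dec. Proof. by case. Qed.
HB.instance Definition _ := Equality.copy sym (can_type sym_encK).

Inductive item := SItem of V | EItem of V & V.
Definition item_enc (x : item) : V + V * V :=
  match x with SItem v => inl v | EItem v w => inr (v, w) end.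
Definition item_dec (x : V + V * V) : item :=
  match x with inl v => SItem v | inr (v, w) => EItem v w end.
Lemma item_encK : cancel item_enc item_dec. Proof. by case => // ? []. Qed.
HB.instance Definition _ := Equality.copy item (can_type item_encK).

(* cyc v : the out-neighbours w_0,...,w_{d-1} of v in their fixed cyclic order *)
Variable cyc : V -> seq V.

Definition cyc_pred (v w : V) : V :=
  let d := size (cyc v) in nth w (cyc v) ((index w (cyc v) + d.-1) %% d).

Definition s_str (v : V) : seq sym :=
  nseq 4 (SymV v) ++ nseq 5 (SymP v) ++ [:: SymD v].
Definition e_str (v w : V) : seq sym :=
  flatten (nseq 4 [:: SymP v; SymV (cyc_pred v w)]) ++ [:: SymP v; SymV w].

Definition item_str (x : item) : seq sym :=
  match x with SItem v => s_str v | EItem v w => e_str v w end.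

Definition item_in (E : rel V) (x : item) : bool :=
  match x with SItem _ => true | EItem v w => E v w end.

Definition batch_str (X : seq item) : seq sym := flatten (map item_str X).
End Defs.

Section LZ.
Variable T : eqType.

(* l (>= 1) is admissible as length of a phrase starting at position p of z:
   u = z[p, p+l) and u^- = z[p, p+l-1) occurs in z starting at some q < p
   (the empty u^- always qualifies). *)
Definition lz_ok (z : seq T) (p l : nat) : bool :=
  (0 < l) && ((l == 1) ||
     [exists q : 'I_p, take l.-1 (drop q z) == take l.-1 (drop p z)]).

Definition lz_len (z : seq T) (p : nat) : nat :=
  \max_(l < (size z - p).+1 | lz_ok z p l) l.

Inductive phrase_start (z : seq T) : nat -> Prop :=
| ps0 : phrase_start z 0
| psS p : phrase_start z p -> p < size z -> phrase_start z (p + lz_len z p).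

(* some phrase of the LZ77 parsing of z ends exactly at position k (i.e. its
   last symbol is z[k-1]) *)
Definition phrase_ends_at (z : seq T) (k : nat) : Prop :=
  exists p, [/\ phrase_start z p, p < size z & p + lz_len z p = k].
End LZ.

(* Every element of S(H) is a string of length 10, so the j-th element of the
   batch occupies the positions [10 j, 10 j + 10), and it suffices to show, block
   by block, that some phrase ends at 10 j + 10. In a block s(v) no phrase can
   run past the symbol $_v, which occurs nowhere else; the phrases starting in
   the block therefore tile it up to its end. A block e(v, w) reads (v' x)^4 v' w
   with x the cyclic predecessor of w, and x <> w since no outdegree is 1. In
   every occurrence of the factor x v' x in the batch string, v' sits at offset
   0, 2, 4 or 6 of this block: the factor fixes v and x, hence w, and the batch
   has no repeated element. So no phrase starting in the first half of the block
   can copy its final x v' w, and a phrase starting in the first half that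
   reaches the middle must copy from two positions back, hence runs exactly to
   the end of the block. *)

From HB Require Import structures.
From mathcomp Require Import all_boot zify.
Set Implicit Arguments. Unset Strict Implicit. Unset Printing Implicit Defensive.

Section LZ77.
Variables (T : eqType) (a0 : T).
Implicit Types (z : seq T) (p q k l : nat).

Lemma lz_ok_source z p l : lz_ok z p l -> 1 < l ->
  exists2 q, q < p & forall t, t < l.-1 -> nth a0 z (q + t) = nth a0 z (p + t).
Proof.
case/andP => _ /orP[/eqP-> // | /existsP[q /eqP Eq]] _.
exists q => // t lt_t; have := congr1 (nth a0 ^~ t) Eq.
by rewrite !nth_take // !nth_drop.
Qed.

Lemma source_lz_ok z p q l : 0 < l -> q < p -> p + l <= size z ->
  (forall t, t < l.-1 -> nth a0 z (q + t) = nth a0 z (p + t)) -> lz_ok z p l.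
Proof.
move=> l_gt0 lt_qp lt_pl_z Eqp; rewrite /lz_ok l_gt0 /=; apply/orP; right.
apply/existsP; exists (Ordinal lt_qp); apply/eqP.
have le_q : l.-1 <= size (drop q z) by rewrite size_drop; lia.
have le_p : l.-1 <= size (drop p z) by rewrite size_drop; lia.
apply: (@eq_from_nth _ a0); first by rewrite !size_takel.
by move=> t; rewrite size_takel // => lt_t; rewrite !nth_take // !nth_drop Eqp.
Qed.

Lemma lz_len_spec z p : p < size z ->
  [/\ lz_ok z p (lz_len z p), 0 < lz_len z p & p + lz_len z p <= size z].
Proof.
move=> lt_pz; have lt1 : 1 < (size z - p).+1 by lia.
have [|l ok_l lenE] := @eq_bigmax_cond _ (fun l : 'I_(size z - p).+1 => lz_ok z p l)
  (fun l : 'I_(size z - p).+1 => nat_of_ord l).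
  by apply/card_gt0P; exists (Ordinal lt1).
rewrite /lz_len lenE; have lt_l := ltn_ord l; have /andP[l_gt0 _] := ok_l.
by split=> //; lia.
Qed.

Lemma lz_len_max z p l : lz_ok z p l -> p + l <= size z -> l <= lz_len z p.
Proof.
move=> ok_l le_l; have lt_l : l < (size z - p).+1 by lia.
exact: (@leq_bigmax_cond _ (fun l : 'I_(size z - p).+1 => lz_ok z p l)
  (fun l : 'I_(size z - p).+1 => nat_of_ord l) (Ordinal lt_l)).
Qed.

Lemma lz_len_source z p : p < size z -> 1 < lz_len z p ->
  exists2 q, q < p & forall t, t < (lz_len z p).-1 -> nth a0 z (q + t) = nth a0 z (p + t).
Proof. by move=> /lz_len_spec[ok _ _]; apply: lz_ok_source. Qed.

Lemma lz_len_reach z p q k : q < p -> p < k -> k <= size z ->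
  (forall t, t < (k - p).-1 -> nth a0 z (q + t) = nth a0 z (p + t)) ->
  k <= p + lz_len z p.
Proof.
move=> lt_qp lt_pk le_kz Eqp.
suff : k - p <= lz_len z p by lia.
by apply: lz_len_max; [apply: (source_lz_ok (q := q)) => //; lia | lia].
Qed.

Lemma phrase_ends_at_start z k : phrase_ends_at z k -> phrase_start z k.
Proof. by case=> p [ps_p lt_pz <-]; apply: psS. Qed.

Lemma phrase_ends_at_walk z a c b : phrase_start z a -> a <= c < b -> b <= size z ->
  (forall p, phrase_start z p -> a <= p <= c ->
     p + lz_len z p <= c \/ p + lz_len z p = b) ->
  phrase_ends_at z b.
Proof.
move=> ps_a /andP[le_ac lt_cb] le_bz step.
suff walk n p : c - p < n -> a <= p <= c -> phrase_start z p -> phrase_ends_at z b.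
  by apply: (walk (c - a).+1 a); rewrite ?leqnn ?le_ac.
elim: n p => [|n IHn] p lt_n range_p ps_p; first by lia.
have /andP[le_ap le_pc] := range_p; have lt_pz : p < size z by lia.
have [_ len_gt0 _] := lz_len_spec lt_pz.
have [le_c|end_b] := step p ps_p range_p; last by exists p.
by apply: (IHn (p + lz_len z p)); [lia | lia | apply: psS].
Qed.

End LZ77.

Lemma addn_predn_mod d i : 0 < d -> i < d ->
  (i + d.-1) %% d = if i is i'.+1 then i' else d.-1.
Proof.
case: i => [|i] d_gt0 lt_id; first by rewrite add0n modn_small // prednK.
by rewrite addSn -addnS prednK // modnDr modn_small //; lia.
Qed.

Section CyclicPredecessor.
Variables (V : finType) (cyc : V -> seq V) (v : V).
Hypothesis cyc_uniq : uniq (cyc v).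
Local Notation d := (size (cyc v)).

Lemma cyc_pred_nth w : w \in cyc v -> exists2 k, k < d &
  [/\ cyc_pred cyc v w = nth w (cyc v) k & k = if index w (cyc v) is i.+1 then i else d.-1].
Proof.
move=> w_in; have lt_i : index w (cyc v) < d by rewrite index_mem.
exists ((index w (cyc v) + d.-1) %% d); first by rewrite ltn_mod; lia.
by split=> //; rewrite addn_predn_mod //; lia.
Qed.

Lemma cyc_pred_mem w : w \in cyc v -> cyc_pred cyc v w \in cyc v.
Proof. by case/cyc_pred_nth=> k lt_k [-> _]; apply: mem_nth. Qed.

Lemma cyc_pred_neq w : 1 < d -> w \in cyc v -> cyc_pred cyc v w != w.
Proof.
move=> d_gt1 w_in; have lt_i : index w (cyc v) < d by rewrite index_mem.
case/cyc_pred_nth: (w_in) => k lt_k [-> kE]; apply/eqP=> /eqP.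
rewrite -{2}(nth_index w w_in) nth_uniq // kE.
by case: (index w (cyc v)) lt_i => [|i] ? /eqP; lia.
Qed.

Lemma cyc_pred_inj : {in cyc v &, injective (cyc_pred cyc v)}.
Proof.
move=> w1 w2 w1_in w2_in.
have lt_i1 : index w1 (cyc v) < d by rewrite index_mem.
have lt_i2 : index w2 (cyc v) < d by rewrite index_mem.
case/cyc_pred_nth: (w1_in) => k1 lt_k1 [-> k1E].
case/cyc_pred_nth: (w2_in) => k2 lt_k2 [-> k2E].
move/eqP; rewrite (set_nth_default w1 w2) // nth_uniq // => /eqP eq_k.
suff eq_i : index w1 (cyc v) = index w2 (cyc v).
  by rewrite -(nth_index w1 w1_in) eq_i (set_nth_default w2) ?nth_index // -eq_i.
move: eq_k lt_i1 lt_i2; rewrite k1E k2E.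
by case: (index w1 _) => [|i1]; case: (index w2 _) => [|i2]; lia.
Qed.

End CyclicPredecessor.

Section BatchString.
Variables (V : finType) (cyc : V -> seq V) (s0 : sym V).

Lemma nth_s_str v r : r < 10 ->
  nth s0 (s_str v) r = if r < 4 then SymV v else if r < 9 then SymP v else SymD v.
Proof. by move: r; do 10!case=> //. Qed.

Lemma nth_e_str v w r : r < 10 ->
  nth s0 (e_str cyc v w) r =
  if odd r then SymV (if r == 9 then w else cyc_pred cyc v w) else SymP v.
Proof. by move: r; do 10!case=> //. Qed.

Lemma size_item_str x : size (item_str cyc x) = 10.
Proof. by case: x. Qed.

Lemma size_batch_str X : size (batch_str cyc X) = 10 * size X.
Proof. by elim: X => //= x X IHX; rewrite size_cat size_item_str IHX mulnS. Qed.

Lemma nth_batch_str x0 X c r : c < size X -> r < 10 ->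
  nth s0 (batch_str cyc X) (10 * c + r) = nth s0 (item_str cyc (nth x0 X c)) r.
Proof.
elim: X c => [|x X IHX] [|c] //= lt_c lt_r; first by rewrite nth_cat size_item_str lt_r.
by rewrite mulnS -addnA nth_cat size_item_str ltnNge leq_addr /= addKn IHX.
Qed.

End BatchString.

Section Batch.
Variables (V : finType) (E : rel V) (cyc : V -> seq V).
Hypothesis E_irrefl : forall v, ~~ E v v.
Hypothesis outdeg_neq1 : forall v, #|[set w | E v w]| != 1.
Hypothesis cyc_uniq : forall v, uniq (cyc v).
Hypothesis mem_cyc : forall v w, (w \in cyc v) = E v w.

Lemma cyc_size_gt1 v w : E v w -> 1 < size (cyc v).
Proof.
move=> Evw; have := outdeg_neq1 v.
have -> : #|[set w | E v w]| = size (cyc v).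
  by rewrite -(card_uniqP (cyc_uniq v)); apply: eq_card => u; rewrite inE mem_cyc.
suff : 0 < size (cyc v) by lia.
by case: (cyc v) (mem_cyc v w) => //; rewrite Evw.
Qed.

Lemma cyc_pred_edge v w : E v w -> E v (cyc_pred cyc v w).
Proof. by move=> Evw; rewrite -mem_cyc cyc_pred_mem // mem_cyc. Qed.

Lemma cyc_pred_edge_neq v w : E v w -> cyc_pred cyc v w != w.
Proof. by move=> Evw; rewrite cyc_pred_neq ?mem_cyc ?(cyc_size_gt1 Evw). Qed.

Variables (X : seq (item V)) (s0 : sym V) (x0 : item V).
Hypothesis X_uniq : uniq X.
Hypothesis X_in : all (item_in E) X.
Local Notation z := (batch_str cyc X).

Lemma batch_edge c v w : c < size X -> nth x0 X c = EItem v w -> E v w.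
Proof. by move=> lt_c Xc; have := all_nthP x0 X_in c lt_c; rewrite Xc. Qed.

Lemma batch_nth_inj c j : c < size X -> j < size X -> nth x0 X c = nth x0 X j -> c = j.
Proof. by move=> lt_c lt_j Xcj; apply/eqP; rewrite -(nth_uniq x0 lt_c lt_j X_uniq) Xcj. Qed.

Lemma batch_pos i : i < size z -> exists c r, [/\ c < size X, r < 10 & i = 10 * c + r].
Proof. by rewrite size_batch_str => lt_i; exists (i %/ 10), (i %% 10); split; lia. Qed.

Lemma symD_pos j v i : j < size X -> nth x0 X j = SItem v ->
  i < size z -> nth s0 z i = SymD v -> i = 10 * j + 9.
Proof.
move=> lt_j Xj /batch_pos[c [r [lt_c lt_r ->]]]; rewrite (nth_batch_str _ _ x0 lt_c lt_r).
case Xc: (nth x0 X c) => [u|u y] /=; last by rewrite nth_e_str //; case: ifP.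
rewrite nth_s_str //; case: ifP => // _; case: ifP => // /negbT r_ge9 [uv].
have -> : c = j by apply: batch_nth_inj; rewrite // Xc Xj uv.
lia.
Qed.

Lemma pred_pattern_pos j v w i : j < size X -> nth x0 X j = EItem v w -> i.+2 < size z ->
  nth s0 z i = SymV (cyc_pred cyc v w) -> nth s0 z i.+1 = SymP v ->
  nth s0 z i.+2 = SymV (cyc_pred cyc v w) ->
  exists2 m, m < 4 & i.+1 = 10 * j + 2 * m.
Proof.
move=> lt_j Xj lt_iz zi zi1 zi2; have Evw := batch_edge lt_j Xj.
have [c [r [lt_c lt_r iE]]] : exists c r, [/\ c < size X, r < 10 & i.+1 = 10 * c + r].
  by apply: batch_pos; lia.
have zE r' : r' < 10 -> nth s0 z (10 * c + r') = nth s0 (item_str cyc (nth x0 X c)) r'.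
  exact: nth_batch_str.
rewrite iE zE // in zi1.
case Xc: (nth x0 X c) zi1 => [u|u y] /=.
  rewrite nth_s_str //; case: ifP => // r_ge4; case: ifP => // _ [uv]; subst u.
  move: zi; rewrite (_ : i = 10 * c + r.-1); last by lia.
  rewrite zE ?Xc ?nth_s_str /=; try lia.
  case: ifP => [_ [vE] | _]; last by case: ifP.
  by have := E_irrefl v; rewrite {2}vE cyc_pred_edge.
rewrite nth_e_str //; case: ifP => // r_even [uv]; subst u.
have Evy := batch_edge lt_c Xc.
have r_ne9 : r != 9 by apply: contraFneq r_even => ->.
move: zi2; rewrite (_ : i.+2 = 10 * c + r.+1); last by lia.
rewrite zE ?Xc ?nth_e_str /= ?r_even /=; try lia.
case: eqP => [r8 [yE] | r_ne8 [predE]].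
  move: zi; rewrite (_ : i = 10 * c + 7); last by lia.
  rewrite zE ?Xc ?nth_e_str //= => -[].
  by rewrite -yE => /eqP; rewrite (negPf (cyc_pred_edge_neq Evy)).
have yw : y = w by apply: (cyc_pred_inj (cyc_uniq v)); rewrite ?mem_cyc.
have cj : c = j by apply: batch_nth_inj; rewrite // Xc Xj yw.
have := odd_double_half r; rewrite r_even add0n -muln2 => rE.
exists r./2; last by lia.
by move: lt_r r_ne8 rE; case: (r./2) => [|[|[|[|[|m]]]]]; lia.
Qed.

Lemma nth_batch_e j v w r : j < size X -> nth x0 X j = EItem v w -> r < 10 ->
  nth s0 z (10 * j + r) = nth s0 (e_str cyc v w) r.
Proof. by move=> lt_j Xj lt_r; rewrite (nth_batch_str _ _ x0 lt_j lt_r) Xj. Qed.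

Lemma e_block_period j v w a : j < size X -> nth x0 X j = EItem v w ->
  10 * j <= a -> a + 2 < 10 * j + 9 -> nth s0 z a = nth s0 z (a + 2).
Proof.
move=> lt_j Xj le_ja lt_a.
have [r le_r ->] : exists2 r, r <= 6 & a = 10 * j + r by exists (a - 10 * j); lia.
rewrite -addnA !(nth_batch_e lt_j Xj); try lia.
by move: r le_r; do 7!case=> //.
Qed.

Lemma s_block_no_cross j v p : j < size X -> nth x0 X j = SItem v ->
  10 * j <= p < 10 * j + 10 -> p + lz_len z p <= 10 * j + 10.
Proof.
move=> lt_j Xj /andP[le_jp lt_p]; have zsize := size_batch_str cyc X.
rewrite leqNgt; apply/negP => cross; have lt_pz : p < size z by lia.
have [|q lt_qp qE] := lz_len_source s0 lt_pz; first by lia.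
have lt_t : 10 * j + 9 - p < (lz_len z p).-1 by lia.
have := qE _ lt_t.
rewrite (_ : p + _ = 10 * j + 9) ?(nth_batch_str _ _ x0 lt_j) ?Xj //; try lia.
by move/(symD_pos lt_j Xj); lia.
Qed.

Lemma e_block_copy_pos j v w k i : j < size X -> nth x0 X j = EItem v w ->
  odd k -> k < 7 -> i.+2 < size z ->
  (forall s, s < 3 -> nth s0 z (i + s) = nth s0 z (10 * j + (k + s))) ->
  exists2 m, m < 4 & i.+1 = 10 * j + 2 * m.
Proof.
move=> lt_j Xj odd_k lt_k lt_iz copy.
have zk s : s < 3 -> nth s0 z (i + s) = nth s0 (e_str cyc v w) (k + s).
  by move=> lt_s; rewrite copy // (nth_batch_e lt_j Xj) //; lia.
apply: (pred_pattern_pos lt_j Xj lt_iz);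
  [rewrite -[i]addn0 | rewrite -addn1 | rewrite -addn2];
  by rewrite zk //; case: k odd_k lt_k {copy zk} => [|[|[|[|[|[|[|k]]]]]]].
Qed.

Lemma e_block_no_cross j v w p : j < size X -> nth x0 X j = EItem v w ->
  10 * j <= p <= 10 * j + 5 -> p + lz_len z p <= 10 * j + 10.
Proof.
move=> lt_j Xj /andP[le_jp le_p]; have zsize := size_batch_str cyc X.
rewrite leqNgt; apply/negP => cross; have lt_pz : p < size z by lia.
have [|q lt_qp qE] := lz_len_source s0 lt_pz; first by lia.
set i := q + (10 * j + 5 - p).
have shift s : s < 5 -> nth s0 z (i + s) = nth s0 z (10 * j + (5 + s)).
  by move=> lt_s; rewrite /i -addnA qE; [f_equal | ]; lia.
have lt_iz : i.+2 < size z by rewrite /i; lia.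
have [m lt_m iE] := e_block_copy_pos (k := 5) lt_j Xj isT isT lt_iz
  (fun s lt_s => shift s (ltn_trans lt_s (isT : 3 < 5))).
have := shift 4 isT; rewrite (_ : i + 4 = 10 * j + (2 * m + 3)); last by lia.
rewrite !(nth_batch_e lt_j Xj) ?nth_e_str; try lia.
rewrite oddD oddM /= => -[].
have -> : (2 * m + 3 == 9) = false by apply/eqP; lia.
by move/eqP; rewrite (negPf (cyc_pred_edge_neq (batch_edge lt_j Xj))).
Qed.

Lemma e_block_phrase j v w p : j < size X -> nth x0 X j = EItem v w ->
  10 * j <= p <= 10 * j + 4 ->
  p + lz_len z p <= 10 * j + 4 \/ p + lz_len z p = 10 * j + 10.
Proof.
move=> lt_j Xj /andP[le_jp le_p]; have zsize := size_batch_str cyc X.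
have [short|long] := leqP (p + lz_len z p) (10 * j + 4); [by left | right].
have lt_pz : p < size z by lia.
have [p_ge2 src] : 2 <= p /\
    forall t, t < (10 * j + 10 - p).-1 -> nth s0 z (p - 2 + t) = nth s0 z (p + t).
  have [le_p2|lt_p2] := leqP (10 * j + 2) p.
    split=> [|t lt_t]; first by lia.
    by rewrite (_ : p + t = p - 2 + t + 2); [apply: (e_block_period lt_j Xj) | ]; lia.
  have [|q lt_qp qE] := lz_len_source s0 lt_pz; first by lia.
  set i := q + (10 * j + 1 - p).
  have shift s : s < 3 -> nth s0 z (i + s) = nth s0 z (10 * j + (1 + s)).
    by move=> lt_s; rewrite /i -addnA qE; [f_equal | ]; lia.
  have lt_iz : i.+2 < size z by rewrite /i; lia.
  have [m _ iE] := e_block_copy_pos (k := 1) lt_j Xj isT isT lt_iz shift.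
  have eq_q : q = p - 2 by lia.
  split=> [|t lt_t]; first by lia.
  have [lt_t2|le_t2] := ltnP t (10 * j + 2 - p); first by rewrite -eq_q qE //; lia.
  by rewrite (_ : p + t = p - 2 + t + 2); [apply: (e_block_period lt_j Xj) | ]; lia.
apply/eqP; rewrite eqn_leq (e_block_no_cross lt_j Xj) /=; last by lia.
by apply: (lz_len_reach _ _ _ src); rewrite ?size_batch_str; lia.
Qed.

Lemma block_phrase_end j : j < size X -> phrase_start z (10 * j) ->
  phrase_ends_at z (10 * j + 10).
Proof.
move=> lt_j ps_j; have zsize := size_batch_str cyc X.
case Xj: (nth x0 X j) => [v|v w].
  apply: (phrase_ends_at_walk (c := 10 * j + 9) ps_j); rewrite ?size_batch_str; try lia.
  move=> p _ /andP[le_jp le_p].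
  have range_p : 10 * j <= p < 10 * j + 10 by rewrite le_jp /=; lia.
  by have := s_block_no_cross lt_j Xj range_p; lia.
apply: (phrase_ends_at_walk (c := 10 * j + 4) ps_j); rewrite ?size_batch_str; try lia.
by move=> p _; apply: (e_block_phrase lt_j Xj).
Qed.

Lemma batch_phrase_start j : j <= size X -> phrase_start z (10 * j).
Proof.
elim: j => [|j IHj] le_j; first exact: ps0.
rewrite mulnS addnC; apply: phrase_ends_at_start.
by apply: block_phrase_end; [lia | apply: IHj; lia].
Qed.

End Batch.

Theorem lemma5 (V : finType) (E : rel V) (cyc : V -> seq V)
  (Hloop : forall v, ~~ E v v)
  (Hdeg : forall v, #|[set w | E v w]| != 1)
  (Hcyc_uniq : forall v, uniq (cyc v))
  (Hcyc_mem : forall v w, (w \in cyc v) = E v w)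
  (X : seq (item V))
  (HXuniq : uniq X)
  (HXin : all (item_in E) X) :
  forall j, j < size X ->
    phrase_ends_at (batch_str cyc X) (size (batch_str cyc (take j.+1 X))).
Proof.
move=> j lt_j; rewrite size_batch_str size_takel // mulnSr.
have x0 : item V by case: (X) lt_j => [|x l].
have s0 : sym V by case: x0 => v *; exact: SymV v.
have ps_j := batch_phrase_start Hloop Hdeg Hcyc_uniq Hcyc_mem s0 x0 HXuniq HXin (ltnW lt_j).
exact: block_phrase_end ps_j.
Qed.
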